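(* Let $G$ be a cacti-graph and $a,b\in E(G)$. If $a$ and $b$ lie in the same component of $G$, then for every integer $k$ with $1\le k\le \Delta G$ there exists a subgraph $F$ of $G$ such that $a,b\in E(F)$, $F$ is a cacti-graph, and $\Delta F=k$. If $a$ and $b$ lie in different components of $G$, then for every integer $k$ with $2\le k\le\Delta G$ there exists a subgraph $F$ of $G$ such that $a,b\in E(F)$, $F$ is a cacti-graph, and $\Delta F=k$.
   Context: Graphs are finite, may have loops and parallel edges, and have no isolated vertices unless stated otherwise. A leaf is a vertex incident to exactly one edge, which is not a loop. $\Delta G=|E(G)|-|V(G)|$. A cycle is a connected graph all of whose vertices have degree 2 (a loop contributes 2). A cacti-graph is a graph with no isolated vertices, no leaves, and no component that is a cycle (equivalently, no isolated vertices, no leaves, and every component contains at least two cycles). *)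

(* Finite multigraphs (loops and parallel edges allowed):
   vertex type V, edge type E (both finite), each edge e has endpoints
   src e and dst e (a loop has src e = dst e).  A (sub)graph is a pair
   (VS, ES) of a vertex set and an edge set whose edges have endpoints in VS. *)
From HB Require Import structures.
From mathcomp Require Import all_boot all_order all_algebra.
Set Implicit Arguments. Unset Strict Implicit. Unset Printing Implicit Defensive.

Section Graphs.
Variables (V E : finType) (src dst : E -> V).

Definition incident (e : E) (v : V) : bool := (src e == v) || (dst e == v).

Definition is_graph (VS : {set V}) (ES : {set E}) : bool :=
  [forall e in ES, (src e \in VS) && (dst e \in VS)].

Definition is_subgraph (VF : {set V}) (EF : {set E}) (VG : {set V}) (EG : {set E}) : bool :=
  [&& is_graph VF EF, VF \subset VG & EF \subset EG].

(* degree; a loop contributes 2 *)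
Definition deg (ES : {set E}) (v : V) : nat :=
  \sum_(e in ES) ((src e == v) + (dst e == v)).

Definition isolated (ES : {set E}) (v : V) : bool :=
  [forall e in ES, ~~ incident e v].

Definition leaf (ES : {set E}) (v : V) : bool :=
  (#|[set e in ES | incident e v]| == 1) &&
  [forall e in ES, incident e v ==> (src e != dst e)].

Definition adj (ES : {set E}) : rel V :=
  fun x y => [exists e in ES, ((src e == x) && (dst e == y)) || ((src e == y) && (dst e == x))].

Definition component (VS : {set V}) (ES : {set E}) (v : V) : {set V} :=
  [set u in VS | connect (adj ES) v u].

(* the component containing v is a cycle: a connected graph all of whose
   vertices have degree 2 (components are connected by construction) *)
Definition component_is_cycle (VS : {set V}) (ES : {set E}) (v : V) : bool :=
  [forall u in component VS ES v, deg ES u == 2].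

Definition cacti (VS : {set V}) (ES : {set E}) : bool :=
  [&& [forall v in VS, ~~ isolated ES v],
      [forall v in VS, ~~ leaf ES v] &
      [forall v in VS, ~~ component_is_cycle VS ES v]].

Definition Delta (VS : {set V}) (ES : {set E}) : int := (#|ES|%:Z - #|VS|%:Z)%R.

End Graphs.

From Pilot Require Import Defs.
From HB Require Import structures.
From mathcomp Require Import all_boot all_order all_algebra.
From mathcomp Require Import zify.
Import Order.TTheory GRing.Theory Num.Theory.
Set Implicit Arguments. Unset Strict Implicit. Unset Printing Implicit Defensive.

(* Call a subgraph D a core if it has minimum degree 2 and every vertex of D is joined
   in D to a vertex of degree at least 3.  Starting from G, which has minimum degree 2,
   repeatedly delete an edge outside a fixed core D and then strip vertices of degree
   at most 1: each round lowers Delta by at most one.  Once Delta = k, delete cycle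
   components (which keeps Delta and, by the degree-3 vertices, never touches D); what
   remains is a cacti-graph containing D.  So it suffices to find a core through a and b
   with Delta <= 1, resp. Delta <= 2.  Start from a path joining a to b; it has
   Delta + #(vertices of degree < 2) <= 1.  A vertex of degree 1 is repaired by walking
   from it through unused edges and fresh vertices until the walk closes up, which adds
   one more edge than vertices; finally, if all degrees are 2, the component of G would
   be a cycle, so one more walk creates a vertex of degree 3. *)

Lemma cardsU_disjoint (T : finType) (A B : {set T}) :
  [disjoint A & B] -> #|A :|: B| = #|A| + #|B|.
Proof. by move=> dAB; apply/eqP; rewrite (leq_card_setU A B).2. Qed.

Lemma disjoint_setU1_shift (T : finType) x (A B : {set T}) :
  x \notin B -> [disjoint A & x |: B] -> [disjoint x |: A & B].
Proof.
move=> xB; rewrite !disjoints_subset subUset sub1set inE xB => /subset_trans; apply.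
by rewrite setCS subsetUr.
Qed.

Lemma path_last_exit (T : eqType) (e : rel T) (A : pred T) x p : path e x p ->
  exists y q, [/\ path e y q, last y q = last x p, all [predC A] q & y = x \/ A y].
Proof.
elim: p x => [|w p IH] x /=; first by exists x, [::]; split=> //; left.
case/andP=> exw /IH[y [q [pq lq aq [yw|Ay]]]]; last by exists y, q; split=> //; right.
subst y; have [Aw|nAw] := boolP (A w); first by exists w, q; split=> //; right.
by exists x, (w :: q); split=> //=; [rewrite exw | rewrite nAw | left].
Qed.

Section Multigraph.
Variables (V E : finType) (src dst : E -> V).
Local Notation deg := (deg src dst).
Local Notation adj := (adj src dst).
Local Notation incident := (incident src dst).
Local Notation is_graph := (is_graph src dst).
Local Notation component := (component src dst).
Local Notation cacti := (cacti src dst).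
Local Notation is_subgraph := (is_subgraph src dst).

Definition mult (e : E) (v : V) : nat := (src e == v) + (dst e == v).

(* The endpoint of [e] opposite to [v]; meaningful only when [incident e v]. *)
Definition other (e : E) (v : V) : V := if src e == v then dst e else src e.

Lemma mult_gt0 e v : incident e v -> 0 < mult e v.
Proof. by rewrite /Defs.incident /mult; case: (src e == v); case: (dst e == v). Qed.

Lemma other_spec e v : incident e v ->
  (src e == v) && (dst e == other e v) || (src e == other e v) && (dst e == v).
Proof.
rewrite /other; case: ifP => [_|ns]; first by rewrite !eqxx.
by rewrite /Defs.incident ns /= => /eqP ->; rewrite !eqxx ?orbT.
Qed.

Lemma adj_sym (A : {set E}) : symmetric (adj A).
Proof.
by move=> x y; apply/existsP/existsP => -[e He]; exists e; rewrite orbC.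
Qed.

Lemma adj_other (A : {set E}) e v : e \in A -> incident e v -> adj A v (other e v).
Proof. by move=> eA /other_spec ev; apply/existsP; exists e; rewrite eA. Qed.

Lemma connect_subset (A B : {set E}) x y :
  A \subset B -> connect (adj A) x y -> connect (adj B) x y.
Proof.
move=> AB; apply: connect_sub => u w /exists_inP[e eA h].
by apply: connect1; apply/exists_inP; exists e; rewrite ?(subsetP AB).
Qed.

Lemma graphP (VS : {set V}) (ES : {set E}) :
  reflect {in ES, forall e, src e \in VS /\ dst e \in VS} (is_graph VS ES).
Proof.
apply: (iffP forall_inP) => h e eE; first exact/andP/h.
by have [-> ->] := h e eE.
Qed.

Lemma incident_graph (VS : {set V}) (ES : {set E}) e v :
  is_graph VS ES -> e \in ES -> incident e v -> v \in VS.
Proof. by move=> /graphP gS /gS[s d] /orP[] /eqP <-. Qed.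

Lemma deg_subset (A B : {set E}) v : A \subset B -> deg A v <= deg B v.
Proof.
move=> AB; rewrite /Defs.deg [X in _ <= X](big_setID A) /= (setIidPr AB).
exact: leq_addr.
Qed.

Lemma deg_setU (A B : {set E}) v :
  [disjoint A & B] -> deg (A :|: B) v = deg A v + deg B v.
Proof. by move=> dAB; rewrite /Defs.deg -bigU //; apply: eq_bigl => e; rewrite inE. Qed.

Lemma deg_set1 e v : deg [set e] v = mult e v.
Proof. by rewrite /Defs.deg big_set1. Qed.

Lemma deg_setU1 e (A : {set E}) v : e \notin A -> deg (e |: A) v = mult e v + deg A v.
Proof. by move=> eA; rewrite deg_setU ?deg_set1 // disjoints_subset sub1set inE. Qed.

Lemma mult_le_deg e (A : {set E}) v : e \in A -> mult e v <= deg A v.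
Proof. by move=> eA; rewrite -deg_set1; apply: deg_subset; rewrite sub1set. Qed.

Lemma deg_setID (A B : {set E}) v : deg A v = deg (A :&: B) v + deg (A :\: B) v.
Proof. exact: big_setID. Qed.

Lemma deg_setC (A : {set E}) v : deg [set: E] v = deg A v + deg (~: A) v.
Proof. by rewrite (deg_setID _ A) setTI setTD. Qed.

Lemma deg_gt0P (A : {set E}) v : reflect (exists2 e, e \in A & incident e v) (0 < deg A v).
Proof.
apply: (iffP idP); last first.
  by case=> e eA /mult_gt0 me; exact: leq_trans me (mult_le_deg v eA).
rewrite lt0n /Defs.deg sum_nat_eq0 negb_forall => /existsP[e].
rewrite negb_imply -lt0n => /andP[eA me]; exists e => //.
by move: me; rewrite /mult /Defs.incident; case: (src e == v); case: (dst e == v).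
Qed.

Lemma mult_eq0 e v : ~~ incident e v -> mult e v = 0.
Proof. by rewrite /Defs.incident /mult negb_or => /andP[/negPf-> /negPf->]. Qed.

Lemma deg_incident (A : {set E}) v :
  deg A v = \sum_(e in [set e in A | incident e v]) mult e v.
Proof.
rewrite /Defs.deg big_mkcond [RHS]big_mkcond; apply: eq_bigr => e _; rewrite inE.
rewrite -/(mult e v).
by case: (boolP (incident e v)) => [_|/mult_eq0 ->]; rewrite ?andbT ?andbF ?if_same.
Qed.

Lemma card_incident_le_deg (A : {set E}) v : #|[set e in A | incident e v]| <= deg A v.
Proof.
rewrite deg_incident -sum1_card; apply: leq_sum => e; rewrite inE => /andP[_].
exact: mult_gt0.
Qed.

Definition min_deg2 (VS : {set V}) (ES : {set E}) := {in VS, forall v, 1 < deg ES v}.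

Lemma leaf_deg (ES : {set E}) v : leaf src dst ES v -> deg ES v = 1.
Proof.
case/andP => /cards1P[e0 he] /forall_inP nloop; rewrite deg_incident he big_set1.
have : e0 \in [set e in ES | incident e v] by rewrite he inE.
rewrite inE => /andP[e0E ev]; move: (nloop e0 e0E); rewrite ev /mult.
move: ev; rewrite /Defs.incident.
by case: (src e0 =P v) => [->|_]; case: (dst e0 =P v) => [->|_]; rewrite ?eqxx.
Qed.

Lemma leafP (ES : {set E}) v :
  ~~ isolated src dst ES v -> deg ES v <= 1 -> leaf src dst ES v.
Proof.
rewrite /isolated negb_forall_in => /exists_inP[e eE /negPn ev] d1; apply/andP; split.
  rewrite eqn_leq (leq_trans (card_incident_le_deg _ _) d1) /=.
  by apply/card_gt0P; exists e; rewrite inE eE ev.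
apply/forall_inP => f fE; apply/implyP => fv; apply: contraTneq d1 => loop.
move: (mult_le_deg v fE) fv; rewrite /mult /Defs.incident -loop orbb => le2 /eqP sv.
by rewrite -ltnNge; apply: leq_trans le2; rewrite sv eqxx.
Qed.

Lemma cacti_min_deg2 (VS : {set V}) (ES : {set E}) : cacti VS ES -> min_deg2 VS ES.
Proof.
case/and3P => /forall_inP niso /forall_inP nleaf _ v vS; rewrite ltnNge.
by apply: contra (nleaf v vS); apply: leafP (niso v vS).
Qed.

Lemma min_deg2_cacti (VS : {set V}) (ES : {set E}) :
  min_deg2 VS ES -> {in VS, forall v, ~~ component_is_cycle src dst VS ES v} ->
  cacti VS ES.
Proof.
move=> m2 ncyc; apply/and3P; split; apply/forall_inP => v vS; last exact: ncyc.
  apply/negP => /forall_inP iso; have [e eE ev] := deg_gt0P ES v (ltnW (m2 v vS)).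
  by move: (iso e eE); rewrite ev.
by apply/negP => /leaf_deg d1; move: (m2 v vS); rewrite d1.
Qed.

Lemma sum_deg_closed (A : {set E}) (C : {set V}) :
    {in A, forall e, (src e \in C) = (dst e \in C)} ->
  \sum_(x in C) deg A x = 2 * #|[set e in A | src e \in C]|.
Proof.
move=> closedC; have sum_eq (y : V) : \sum_(x in C) (y == x) = (y \in C).
  case: (boolP (y \in C)) => yC; last first.
    by rewrite big1 // => x xC; apply/eqP; rewrite eqb0; apply: contraNneq yC => ->.
  by rewrite (bigD1 y) //= eqxx big1 // => x /andP[_ /negPf]; rewrite eq_sym => ->.
rewrite /Defs.deg exchange_big /= -sum1_card big_distrr /= big_mkcond [RHS]big_mkcond.
apply: eq_bigr => e _; rewrite inE; case: (boolP (e \in A)) => //= eA.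
by rewrite big_split /= !sum_eq -(closedC e eA); case: (src e \in C).
Qed.

Lemma handshake (VS : {set V}) (ES : {set E}) :
  is_graph VS ES -> \sum_(x in VS) deg ES x = 2 * #|ES|.
Proof.
move/graphP=> gS; rewrite sum_deg_closed => [|e /gS[-> ->] //].
by congr (_ * _); apply: eq_card => e; rewrite inE andb_idr // => /gS[].
Qed.

Lemma component_closed (VS : {set V}) (ES : {set E}) w :
  is_graph VS ES -> {in ES, forall e,
    (src e \in component VS ES w) = (dst e \in component VS ES w)}.
Proof.
move/graphP=> gS e eS; have [s d] := gS e eS.
have sd : adj ES (src e) (dst e) by apply/exists_inP; exists e; rewrite ?eqxx.
rewrite !inE s d /=; apply/idP/idP => /connect_trans; apply; apply: connect1 => //.
by rewrite adj_sym.
Qed.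

Lemma subgraph_trans (V1 V2 V3 : {set V}) (E1 E2 E3 : {set E}) :
  is_subgraph V1 E1 V2 E2 -> is_subgraph V2 E2 V3 E3 -> is_subgraph V1 E1 V3 E3.
Proof.
case/and3P=> g1 s12 t12 /and3P[_ s23 t23].
by apply/and3P; split; [|exact: subset_trans s23|exact: subset_trans t23].
Qed.

Lemma subgraph_refl (VS : {set V}) (ES : {set E}) :
  is_graph VS ES -> is_subgraph VS ES VS ES.
Proof. by move=> gS; apply/and3P. Qed.

Lemma subgraph_delete_vertex (VS : {set V}) (ES : {set E}) v :
  is_graph VS ES -> is_subgraph (VS :\ v) [set e in ES | ~~ incident e v] VS ES.
Proof.
move/graphP=> gS; apply/and3P; split; last 2 first.
- exact: subD1set.
- by apply/subsetP => e; rewrite inE => /andP[].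
apply/graphP => e; rewrite inE /Defs.incident negb_or => /andP[/gS[s d] /andP[sv dv]].
by rewrite !inE s d sv dv.
Qed.

Lemma prune (VD VH : {set V}) (ED EH : {set E}) :
  is_graph VH EH -> is_subgraph VD ED VH EH -> min_deg2 VD ED ->
  exists VH' EH', [/\ is_subgraph VD ED VH' EH', is_subgraph VH' EH' VH EH,
    min_deg2 VH' EH' & #|EH| + #|VH'| <= #|EH'| + #|VH|].
Proof.
move=> + + mD; have [n] := ubnP #|VH|; elim: n VH EH => // n IH VH EH ltVn gH sDH.
have [/exists_inP[v vH dv]|] := boolP [exists v in VH, deg EH v <= 1]; last first.
  move=> /exists_inPn low; exists VH, EH; split=> //; first exact: subgraph_refl.
  by move=> v /low; rewrite -ltnNge.
case/and3P: sDH => gD sVD sED.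
have vD : v \notin VD.
  by apply: contraL dv => /mD /leq_trans; rewrite -ltnNge; apply; apply: deg_subset.
set VH1 := VH :\ v; set EH1 := [set e in EH | ~~ incident e v].
have sH1 : is_subgraph VH1 EH1 VH EH by apply: subgraph_delete_vertex.
have sDH1 : is_subgraph VD ED VH1 EH1.
  apply/and3P; split=> //; apply/subsetP.
    by move=> x xD; rewrite !inE (subsetP sVD) // andbT; apply: contraNneq vD => <-.
  move=> e eD; rewrite inE (subsetP sED) //=.
  by apply: contra vD => /(incident_graph gD eD).
have cardVH : #|VH| = #|VH1|.+1 by rewrite [LHS](cardsD1 v) vH.
have cardEH : #|EH| <= #|EH1| + 1.
  rewrite -(cardsID [set e | incident e v] EH) addnC leq_add //.
    by apply: subset_leq_card; apply/subsetP => e; rewrite !inE andbC.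
  apply: leq_trans dv; apply: leq_trans (card_incident_le_deg EH v).
  by apply: subset_leq_card; apply/subsetP => e; rewrite !inE andbC.
have [||VH' [EH' [sDH' sH'H1 mH' cnt]]] := IH VH1 EH1 _ _ sDH1.
- by rewrite -ltnS -cardVH.
- by case/and3P: sH1.
exists VH', EH'; split=> //; first exact: subgraph_trans sH'H1 sH1.
by move: cnt cardEH; rewrite cardVH; clear; lia.
Qed.

Definition branching (VS : {set V}) (ES : {set E}) :=
  {in VS, forall v, exists2 u, u \in VS & connect (adj ES) v u && (2 < deg ES u)}.

Definition core (VS : {set V}) (ES : {set E}) :=
  [/\ is_graph VS ES, min_deg2 VS ES & branching VS ES].

Lemma core_disjoint_cycle (VD VF : {set V}) (ED EF : {set E}) w :
  core VD ED -> is_subgraph VD ED VF EF -> component_is_cycle src dst VF EF w ->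
  [disjoint VD & component VF EF w].
Proof.
case=> _ _ brD /and3P[_ sVD sED] /forall_inP cycC; apply/pred0P => v /=.
apply/negP => /andP[vD]; rewrite inE => /andP[_ wv].
have [u uD /andP[vu du]] := brD v vD.
have /cycC/eqP uC : u \in component VF EF w.
  by rewrite inE (subsetP sVD) //= (connect_trans wv) // (connect_subset sED).
by move: (deg_subset u sED); rewrite uC; case: (deg ED u) du => [|[|[]]].
Qed.

Lemma remove_cycle_component (VD VF : {set V}) (ED EF : {set E}) w :
  core VD ED -> is_subgraph VD ED VF EF -> is_graph VF EF -> min_deg2 VF EF ->
  w \in VF -> component_is_cycle src dst VF EF w ->
  exists VF' EF', [/\ is_subgraph VD ED VF' EF', is_subgraph VF' EF' VF EF,
    min_deg2 VF' EF', #|EF'| + #|VF| = #|EF| + #|VF'| & #|VF'| < #|VF|].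
Proof.
move=> cD sDF gF mF wF cyc; have dDC := core_disjoint_cycle cD sDF cyc.
have closedC := component_closed w gF; set C := component VF EF w in dDC cyc closedC.
set EC := [set e in EF | src e \in C].
have wC : w \in C by rewrite inE wF connect0.
have CF : C \subset VF by apply/subsetP => x; rewrite inE => /andP[].
have ECF : EC \subset EF by apply/subsetP => e; rewrite inE => /andP[].
have cardEC : #|EC| = #|C|.
  apply/eqP; rewrite -(eqn_pmul2l (isT : 0 < 2)) -sum_deg_closed //.
  by rewrite (eq_bigr (fun=> 2)) => [|u /(forall_inP cyc)/eqP //]; rewrite sum_nat_const mulnC.
have ends_notC e : e \in EF :\: EC -> src e \notin C /\ dst e \notin C.
  rewrite in_setD [e \in EC]inE => /andP[+ eF]; rewrite eF /= -(closedC e eF).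
  by move=> sC; split.
have sF'F : is_subgraph (VF :\: C) (EF :\: EC) VF EF.
  apply/and3P; split; [apply/graphP => e eF' | exact: subsetDl | exact: subsetDl].
  have [sC dC] := ends_notC e eF'; move: eF'; rewrite inE => /andP[_ /(graphP _ _ gF)[s d]].
  by rewrite !in_setD s d sC dC.
exists (VF :\: C), (EF :\: EC); split=> //.
- case/and3P: sDF => gD sVD sED; apply/and3P; split=> //; apply/subsetP.
    by move=> x xD; rewrite in_setD (subsetP sVD) // (disjointFr dDC xD).
  move=> e eD; have [s _] := graphP _ _ gD e eD.
  by rewrite in_setD [e \in EC]inE (subsetP sED) // (disjointFr dDC s).
- move=> v; rewrite in_setD => /andP[vC vF]; move: (mF v vF).
  rewrite (deg_setID _ EC) (setIidPr ECF); suff -> : deg EC v = 0 by [].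
  apply/eqP; rewrite -leqn0 leqNgt; apply/negP => /deg_gt0P[e].
  rewrite [e \in EC]inE => /andP[eF sC] /orP[] /eqP ev; move: vC; rewrite -ev ?sC //.
  by rewrite -(closedC e eF) sC.
- move: (cardsID EC EF) (cardsID C VF); rewrite (setIidPr ECF) (setIidPr CF) cardEC.
  by clear; lia.
- rewrite -(cardsID C VF) (setIidPr CF) -[X in X < _]add0n ltn_add2r card_gt0.
  by apply/set0Pn; exists w.
Qed.

Lemma delete_edge_outside_core (k : nat) (VD VF : {set V}) (ED EF : {set E}) :
  core VD ED -> #|ED| <= #|VD| + k ->
  is_graph VF EF -> is_subgraph VD ED VF EF -> #|VF| + k < #|EF| ->
  exists VF' EF', [/\ is_subgraph VD ED VF' EF', is_subgraph VF' EF' VF EF,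
    min_deg2 VF' EF', #|VF'| + k <= #|EF'| & #|EF'| + #|VF'| < #|EF| + #|VF|].
Proof.
move=> [_ mD _] cardD gF sDF ltF.
have [e eF eD] : exists2 e, e \in EF & e \notin ED.
  apply/exists_inP; apply: contraLR ltF => /exists_inPn inD; rewrite -leqNgt.
  case/and3P: sDF => _ /subset_leq_card sVD _; apply: leq_trans (leq_add sVD (leqnn k)).
  by apply: leq_trans cardD; apply/subset_leq_card/subsetP => f /inD /negPn.
have sF1F : is_subgraph VF (EF :\ e) VF EF.
  apply/and3P; split; [|exact: subxx|exact: subD1set].
  by apply/graphP => f /setD1P[_ /(graphP _ _ gF)].
have sDF1 : is_subgraph VD ED VF (EF :\ e).
  case/and3P: sDF => gD sVD sED; apply/and3P; split=> //.
  by apply/subsetP => f fD; rewrite in_setD1 (subsetP sED) // andbT; apply: contraNneq eD => <-.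
have [gF1 _ _] := and3P sF1F.
have [VF' [EF' [sDF' sF'F1 mF' cardF']]] := prune gF1 sDF1 mD.
have cardEF : #|EF| = #|EF :\ e|.+1 by rewrite [LHS](cardsD1 e) eF.
have [_ /subset_leq_card sVF' /subset_leq_card sEF'] := and3P sF'F1.
exists VF', EF'; split=> //; first exact: subgraph_trans sF'F1 sF1F.
all: by move: ltF cardEF sVF' sEF' cardF'; clear; lia.
Qed.

Lemma reduce_to_cacti (k : nat) (VD VF : {set V}) (ED EF : {set E}) :
  core VD ED -> #|ED| <= #|VD| + k ->
  is_graph VF EF -> is_subgraph VD ED VF EF -> min_deg2 VF EF -> #|VF| + k <= #|EF| ->
  exists VF' EF', [/\ is_subgraph VD ED VF' EF', is_subgraph VF' EF' VF EF,
    cacti VF' EF' & #|EF'| = #|VF'| + k].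
Proof.
move=> cD cardD; have [n] := ubnP (#|EF| + #|VF|).
elim: n VF EF => // n IH VF EF ltFn gF sDF mF cardF.
have descend VF' EF' : is_subgraph VD ED VF' EF' -> is_subgraph VF' EF' VF EF ->
    min_deg2 VF' EF' -> #|VF'| + k <= #|EF'| -> #|EF'| + #|VF'| < #|EF| + #|VF| ->
  exists VF'' EF'', [/\ is_subgraph VD ED VF'' EF'', is_subgraph VF'' EF'' VF EF,
    cacti VF'' EF'' & #|EF''| = #|VF''| + k].
  move=> sDF' sF'F mF' cardF' lt'; have gF' : is_graph VF' EF' by case/and3P: sF'F.
  have [|VF'' [EF'' [sDF'' sF''F' cF'' eq'']]] := IH VF' EF' _ gF' sDF' mF' cardF'.
    exact: leq_trans lt' _.
  by exists VF'', EF''; split=> //; apply: subgraph_trans sF''F' sF'F.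
case: (ltngtP (#|VF| + k) #|EF|) cardF => // [ltF _|eqF _].
  have [VF' [EF' [sDF' sF'F mF' cardF' lt']]] := delete_edge_outside_core cD cardD gF sDF ltF.
  exact: descend sDF' sF'F mF' cardF' lt'.
have [/exists_inP[w wF cyc]|ncyc] := boolP [exists w in VF, component_is_cycle src dst VF EF w].
  have [VF' [EF' [sDF' sF'F mF' cardF' ltV]]] := remove_cycle_component cD sDF gF mF wF cyc.
  by apply: descend sDF' sF'F mF' _ _; move: eqF cardF' ltV; clear; lia.
exists VF, EF; split; [by []|exact: subgraph_refl| |by rewrite eqF].
by apply: min_deg2_cacti => // w wF; apply: contraNN ncyc => cyc; apply/exists_inP; exists w.
Qed.

Definition connected_from (r : V) (VS : {set V}) (ES : {set E}) :=
  {in VS, forall x, connect (adj ES) r x}.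

Definition deficient (VS : {set V}) (ES : {set E}) := [set x in VS | deg ES x < 2].

Lemma connected_from_subset r (VS : {set V}) (ES ES' : {set E}) :
  connected_from r VS ES -> ES \subset ES' -> connected_from r VS ES'.
Proof. by move=> cS sES x /cS; apply: connect_subset. Qed.

Lemma connected_from_setU1 r (VS : {set V}) (ES : {set E}) v e :
  connected_from r VS ES -> v \in VS -> incident e v ->
  connected_from r (other e v |: VS) (e |: ES).
Proof.
move=> cS vS ev x /setU1P[->|/cS]; last by apply: connect_subset; rewrite subsetUr.
apply: connect_trans (connect_subset (subsetUr [set e] ES) (cS v vS)) (connect1 _).
by apply: adj_other; rewrite ?setU11.
Qed.

Lemma connected_branching r (VS : {set V}) (ES : {set E}) u :
  connected_from r VS ES -> u \in VS -> 2 < deg ES u -> branching VS ES.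
Proof.
move=> cS uS du v vS; exists u => //; rewrite du andbT.
by apply: connect_trans (cS u uS); rewrite (sym_connect_sym (adj_sym ES)) cS.
Qed.

Lemma connect_closed_graph (VS : {set V}) (ES : {set E}) x y :
  is_graph VS ES -> {in VS, forall v e, incident e v -> e \in ES} ->
  connect (adj [set: E]) x y -> (x \in VS) = (y \in VS).
Proof.
move=> gS clS; apply: closed_connect.
apply: (intro_closed (sym_connect_sym (adj_sym _))) => u w /exists_inP[e _ euw] uS.
have eu : incident e u.
  by rewrite /Defs.incident; case/orP: euw => /andP[/eqP-> /eqP->]; rewrite eqxx ?orbT.
have [s d] := graphP _ _ gS e (clS u uS e eu).
by case/orP: euw => /andP[/eqP sx /eqP dy]; rewrite -?dy -?sx.
Qed.

Definition rooted r (VS : {set V}) (ES : {set E}) :=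
  [/\ is_graph VS ES, r \in VS, connected_from r VS ES & {in VS, forall x, 0 < deg ES x}].

(* [budget]: Delta + #deficient <= 1.  [tip_budget t]: Delta + #(deficient minus t) <= 0,
   i.e. the deficient tip [t] of a path under construction is paid for in advance. *)
Definition budget (VS : {set V}) (ES : {set E}) :=
  #|ES| + #|deficient VS ES| <= #|VS| + 1.

Definition tip_budget t (VS : {set V}) (ES : {set E}) :=
  #|ES| + #|deficient VS ES :\ t| <= #|VS|.

Lemma tip_budget_budget t (VS : {set V}) (ES : {set E}) :
  tip_budget t VS ES -> budget VS ES.
Proof.
rewrite /tip_budget /budget (cardsD1 t (deficient VS ES)).
by case: (t \in _); lia.
Qed.

Lemma deficient_add_edge (VS : {set V}) (ES : {set E}) e t :
  e \notin ES -> incident e t -> 0 < deg ES t ->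
  deficient VS (e |: ES) \subset deficient VS ES :\ t.
Proof.
move=> eE et dt; apply/subsetP => x; rewrite !inE deg_setU1 // => /andP[xS dx].
rewrite xS (leq_ltn_trans (leq_addl _ _) dx) !andbT; apply: contraTneq dx => ->.
by move: (mult_gt0 et); lia.
Qed.

Lemma rooted_tip_close r t (VF : {set V}) (EF : {set E}) e :
  rooted r VF EF -> t \in VF -> tip_budget t VF EF -> e \notin EF -> incident e t ->
  other e t \in VF -> rooted r VF (e |: EF) /\ budget VF (e |: EF).
Proof.
case=> gF rF cF posF tF tb eE et yF; have os := other_spec et.
split; first split=> //.
- apply/graphP => f /setU1P[->|/(graphP _ _ gF) //].
  by case/orP: os => /andP[/eqP-> /eqP->].
- by apply: connected_from_subset cF (subsetUr _ _).
- by move=> x /posF/leq_trans; apply; apply: deg_subset; rewrite subsetUr.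
move: tb; rewrite /tip_budget /budget cardsU1 eE add1n.
by move: (subset_leq_card (deficient_add_edge VF eE et (posF t tF))); clear; lia.
Qed.

Lemma rooted_tip_new r t (VF : {set V}) (EF : {set E}) e :
  rooted r VF EF -> t \in VF -> tip_budget t VF EF -> incident e t -> other e t \notin VF ->
  rooted r (other e t |: VF) (e |: EF) /\ tip_budget (other e t) (other e t |: VF) (e |: EF).
Proof.
case=> gF rF cF posF tF tb et yF; have os := other_spec et; set y := other e t in yF os *.
have ey : incident e y.
  by rewrite /Defs.incident; case/orP: os => /andP[/eqP-> /eqP->]; rewrite eqxx ?orbT.
have eE : e \notin EF by apply: contra yF => eF; apply: incident_graph gF eF ey.
split; first split.
- apply/graphP => f /setU1P[->|/(graphP _ _ gF)[s d]]; last by rewrite !in_setU1 s d !orbT.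
  by case/orP: os => /andP[/eqP-> /eqP->]; rewrite !in_setU1 tF eqxx ?orbT.
- by rewrite in_setU1 rF orbT.
- exact: connected_from_setU1.
- move=> x /setU1P[->|/posF/leq_trans]; last by apply; apply: deg_subset; rewrite subsetUr.
  by rewrite deg_setU1 // (leq_trans (mult_gt0 ey)) ?leq_addr.
have def_sub : deficient (y |: VF) (e |: EF) :\ y \subset deficient VF EF :\ t.
  apply: subset_trans (deficient_add_edge VF eE et (posF t tF)); apply/subsetP => x.
  by rewrite !inE => /and3P[xy /orP[/eqP xy'|->] ->] //; rewrite xy' eqxx in xy.
move: tb; rewrite /tip_budget !cardsU1 eE yF !add1n.
by move: (subset_leq_card def_sub); clear; lia.
Qed.

Lemma rooted_edge a t : t \in [set src a; dst a] ->
  rooted (src a) [set src a; dst a] [set a] /\ tip_budget t [set src a; dst a] [set a].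
Proof.
move=> tA; have aends x : x \in [set src a; dst a] -> 0 < mult a x.
  by rewrite !inE /mult => /orP[] /eqP->; rewrite eqxx ?addn1.
split; first split.
- by apply/graphP => e /set1P->; rewrite !inE !eqxx ?orbT.
- by rewrite !inE eqxx.
- move=> x /set2P[->|->]; first exact: connect0.
  by apply: connect1; apply/exists_inP; exists a; rewrite ?inE ?eqxx.
- by move=> x /aends; rewrite deg_set1.
rewrite /tip_budget cards1.
have sub : deficient [set src a; dst a] [set a] :\ t \subset [set src a; dst a] :\ t.
  by apply/setSD/subsetP => x; rewrite inE => /andP[].
apply: leq_trans (leq_add (leqnn 1) (subset_leq_card sub)) _.
by rewrite [X in _ <= X](cardsD1 t) tA.
Qed.

Lemma rooted_add_edge r t (VF : {set V}) (EF : {set E}) e :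
  rooted r VF EF -> t \in VF -> tip_budget t VF EF -> incident e t ->
  exists VF' EF', [/\ rooted r VF' EF', budget VF' EF', e \in EF' & EF \subset EF'].
Proof.
move=> rF tF tb et; have [eF|eE] := boolP (e \in EF).
  by exists VF, EF; split=> //; exact: tip_budget_budget tb.
have [yF|yF] := boolP (other e t \in VF).
  have [rF' bF'] := rooted_tip_close rF tF tb eE et yF.
  by exists VF, (e |: EF); rewrite setU11 subsetUr.
have [rF' tb'] := rooted_tip_new rF tF tb et yF.
exists (other e t |: VF), (e |: EF); rewrite setU11 subsetUr; split=> //.
exact: tip_budget_budget tb'.
Qed.

Lemma rooted_tip_path r t q (VF : {set V}) (EF : {set E}) :
  rooted r VF EF -> t \in VF -> tip_budget t VF EF ->
  path (adj [set: E]) t q -> uniq q -> {in q, forall x, x \notin VF} ->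
  exists VF' EF', [/\ rooted r VF' EF', last t q \in VF', tip_budget (last t q) VF' EF'
    & EF \subset EF'].
Proof.
elim: q t VF EF => [|w q IH] t VF EF rF tF tb /=; first by exists VF, EF; split.
case/andP=> /exists_inP[e _ etw] pq /andP[wq uq] newq.
have wF := newq w (mem_head w q).
have et : incident e t.
  by rewrite /Defs.incident; case/orP: etw => /andP[/eqP-> /eqP->]; rewrite eqxx ?orbT.
have ow : other e t = w.
  rewrite /other; case/orP: etw => /andP[/eqP-> /eqP->]; rewrite ?eqxx //.
  by case: eqP => // wt; rewrite wt tF in wF.
have [] := rooted_tip_new rF tF tb et; rewrite ow // => rF' tb'.
have [|VF' [EF' [rF'' lF tb'' sE]]] := IH w _ _ rF' (setU11 w VF) tb' pq uq.
  move=> x xq; rewrite in_setU1 negb_or newq ?inE ?xq ?orbT // andbT.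
  by apply: contraNneq wq => <-.
by exists VF', EF'; split=> //; apply: subset_trans sE; rewrite subsetUr.
Qed.

Lemma core_setU (V1 V2 : {set V}) (E1 E2 : {set E}) :
  core V1 E1 -> core V2 E2 -> core (V1 :|: V2) (E1 :|: E2).
Proof.
have lift (Vi : {set V}) (Ei : {set E}) : core Vi Ei -> Ei \subset E1 :|: E2 ->
    {in Vi, forall x, 1 < deg (E1 :|: E2) x /\
      exists2 u, u \in Vi & connect (adj (E1 :|: E2)) x u && (2 < deg (E1 :|: E2) u)}.
  case=> _ mi bi sEi x xi; split; first exact: leq_trans (mi x xi) (deg_subset x sEi).
  have [u ui /andP[xu du]] := bi x xi; exists u => //.
  by rewrite (connect_subset sEi xu) (leq_trans du) ?deg_subset.
move=> c1 c2; have [g1 _ _] := c1; have [g2 _ _] := c2.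
have l1 := lift _ _ c1 (subsetUl E1 E2); have l2 := lift _ _ c2 (subsetUr E1 E2).
split.
- apply/graphP => e /setUP[/(graphP _ _ g1)|/(graphP _ _ g2)] [s d];
  by rewrite !in_setU s d ?orbT.
- by move=> x /setUP[/l1|/l2] [].
- by move=> x /setUP[/l1|/l2] [_ [u ui xu]]; exists u; rewrite // in_setU ui ?orbT.
Qed.

Section Growth.
Hypothesis G_cacti : cacti [set: V] [set: E].

Lemma deg_gt1 v : 1 < deg [set: E] v.
Proof. exact: cacti_min_deg2 G_cacti v (in_setT v). Qed.

Lemma second_edge g w : mult g w <= 1 -> exists2 h, h != g & incident h w.
Proof.
move=> gw; have /deg_gt0P[h] : 0 < deg (~: [set g]) w.
  by move: (deg_gt1 w) gw; rewrite (deg_setC [set g]) deg_set1; clear; lia.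
by rewrite !inE => hg hw; exists h.
Qed.

Lemma not_cycle_component r : ~~ component_is_cycle src dst [set: V] [set: E] r.
Proof. by case/and3P: G_cacti => _ _ /forall_inP; apply; rewrite in_setT. Qed.

(* Walk from [v] along [g] through fresh vertices; a fresh vertex always has a second
   edge since G has minimum degree 2, and the walk stops on reaching [VF] or itself. *)
Lemma grow_walk (VF : {set V}) (EF : {set E}) v g :
  is_graph VF EF -> v \in VF -> g \notin EF -> incident g v ->
  exists (N : {set V}) (EW : {set E}),
    [/\ [disjoint N & VF], [disjoint EW & EF], g \in EW & #|EW| = #|N| + 1] /\
    [/\ is_graph (VF :|: N) (EF :|: EW), {in N, forall x, 1 < deg EW x} &
        forall r, connected_from r VF EF -> connected_from r (VF :|: N) (EF :|: EW)].
Proof.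
have [n] := ubnP #|~: VF|; elim: n VF EF v g => // n IH VF EF v g ltn gF vF gE gv.
have os := other_spec gv; set w := other g v in os.
have ends_g : src g \in w |: VF /\ dst g \in w |: VF.
  by case/orP: os => /andP[/eqP-> /eqP->]; rewrite !inE vF eqxx ?orbT.
have [wF|wF] := boolP (w \in VF).
  exists set0, [set g]; split; split.
  - by rewrite disjoints_subset sub0set.
  - by rewrite disjoints1.
  - by rewrite inE.
  - by rewrite cards0 cards1.
  - apply/graphP => e; rewrite setU0 in_setU in_set1 => /orP[/(graphP _ _ gF)// | /eqP->].
    by rewrite -(setUidPr (_ : [set w] \subset VF)) ?sub1set.
  - by move=> x; rewrite inE.
  - by move=> r cF; rewrite setU0; apply: connected_from_subset cF (subsetUl _ _).
have wv : w != v by apply: contraNneq wF => ->.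
have mult_gw : mult g w = 1.
  by rewrite /mult; case/orP: os => /andP[/eqP-> /eqP->]; rewrite eqxx eq_sym (negPf wv).
have [h hg hw] := second_edge (eq_leq mult_gw).
have hF : h \notin g |: EF.
  by rewrite !inE negb_or hg; apply: contra wF => hF; apply: incident_graph gF hF hw.
have gF1 : is_graph (w |: VF) (g |: EF).
  apply/graphP => e; rewrite in_setU1 => /predU1P[-> //|/(graphP _ _ gF)[s d]].
  by rewrite !in_setU1 s d !orbT.
have [|N [EW [[dN dEW hEW cardEW] [gN degN connN]]]] :=
  IH (w |: VF) (g |: EF) w h _ gF1 (setU11 w VF) hF hw.
  by move: ltn; rewrite setCU (cardsD1 w (~: VF)) inE wF setDE setIC.
have wN : w \notin N by rewrite (disjointFl dN) ?setU11.
have gEW : g \notin EW by rewrite (disjointFl dEW) ?setU11.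
have VFN : VF :|: (w |: N) = (w |: VF) :|: N by rewrite setUCA setUA.
have EFW : EF :|: (g |: EW) = (g |: EF) :|: EW by rewrite setUCA setUA.
exists (w |: N), (g |: EW); split; split.
- exact: disjoint_setU1_shift.
- exact: disjoint_setU1_shift.
- exact: setU11.
- by rewrite !cardsU1 wN gEW cardEW addnA.
- by rewrite VFN EFW.
- move=> x /setU1P[->|/degN]; last by move/leq_trans; apply; apply: deg_subset; rewrite subsetUr.
  by rewrite deg_setU1 // mult_gw ltnS; exact: leq_trans (mult_gt0 hw) (mult_le_deg w hEW).
- by move=> r cF; rewrite VFN EFW; apply/connN/connected_from_setU1.
Qed.

Lemma grow_min_deg2 r (VF : {set V}) (EF : {set E}) :
  is_graph VF EF -> connected_from r VF EF -> {in VF, forall x, 0 < deg EF x} ->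
  budget VF EF ->
  exists VD ED, [/\ is_graph VD ED, VF \subset VD, EF \subset ED, connected_from r VD ED
    & min_deg2 VD ED] /\ #|ED| <= #|VD| + 1.
Proof.
have [n] := ubnP #|deficient VF EF|; elim: n VF EF => // n IH VF EF ltn gF cF posF budget.
have [def0|[v]] := set_0Vmem (deficient VF EF).
  exists VF, EF; do !split; rewrite ?subxx //; last first.
    by move: budget; rewrite /budget def0 cards0 addn0.
  move=> x xF; have : x \notin deficient VF EF by rewrite def0 inE.
  by rewrite inE xF -leqNgt.
rewrite inE => /andP[vF dv].
have /deg_gt0P[g] : 0 < deg (~: EF) v by move: (deg_gt1 v) dv; rewrite (deg_setC EF); clear; lia.
rewrite inE => gE gv.
have [N [EW [[dN dEW gEW cardEW] [gFN degN connN]]]] := grow_walk gF vF gE gv.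
have degU x : deg (EF :|: EW) x = deg EF x + deg EW x by rewrite deg_setU // disjoint_sym.
have def_sub : deficient (VF :|: N) (EF :|: EW) \subset deficient VF EF :\ v.
  apply/subsetP => x; rewrite !inE degU => /andP[/orP[xF|/degN]] dx; last by move: dx; clear; lia.
  have dxF : deg EF x < 2 by move: dx; clear; lia.
  rewrite xF dxF !andbT; apply: contraTneq dx => ->; rewrite -leqNgt.
  by move: (posF v vF) (leq_trans (mult_gt0 gv) (mult_le_deg v gEW)); clear; lia.
have ltdef : #|deficient (VF :|: N) (EF :|: EW)| < #|deficient VF EF|.
  apply: leq_ltn_trans (subset_leq_card def_sub) _.
  by rewrite [X in _ < X](cardsD1 v) inE vF dv.
have [|||VD [ED [[gD sVD sED cD mD] cardD]]] := IH (VF :|: N) (EF :|: EW) _ gFN (connN r cF).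
- by apply: leq_trans ltdef _; rewrite -ltnS.
- by move=> x; rewrite in_setU degU => /orP[/posF|/degN]; clear; lia.
- by move: budget ltdef; rewrite /budget !cardsU_disjoint 1?disjoint_sym // cardEW; clear; lia.
exists VD, ED; split=> //; split=> //.
- exact: subset_trans (subsetUl _ _) sVD.
- exact: subset_trans (subsetUl _ _) sED.
Qed.

Lemma grow_branch r (VF : {set V}) (EF : {set E}) :
  is_graph VF EF -> r \in VF -> connected_from r VF EF -> min_deg2 VF EF ->
  #|EF| <= #|VF| + 1 ->
  exists VD ED, [/\ core VD ED, VF \subset VD, EF \subset ED, connected_from r VD ED
    & #|ED| <= #|VD| + 1].
Proof.
move=> gF rF cF mF cardF.
have [/exists_inP[u uF du]|/exists_inPn deg_le2] := boolP [exists u in VF, 2 < deg EF u].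
  by exists VF, EF; split=> //; split=> //; apply: connected_branching cF uF du.
have deg2 : {in VF, forall x, deg EF x = 2}.
  by move=> x xF; move: (mF x xF) (deg_le2 x xF); rewrite -leqNgt; clear; lia.
have cardEF : #|EF| = #|VF|.
  move: (handshake gF); rewrite (eq_bigr (fun=> 2)) => [|x /deg2 //].
  by rewrite sum_nat_const; clear; lia.
have : [exists w in VF, [exists g, (g \notin EF) && incident g w]].
  (* otherwise the component of r in G would be the 2-regular graph F *)
  apply: contraLR (not_cycle_component r) => /exists_inPn closedF; rewrite negbK.
  have clF : {in VF, forall v e, incident e v -> e \in EF}.
    move=> v vF e ev; apply: contraNT (closedF v vF) => eE.
    by apply/existsP; exists e; rewrite eE.
  apply/forall_inP => u; rewrite inE => /andP[_ ru].
  have uF : u \in VF by rewrite -(connect_closed_graph gF clF ru).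
  rewrite (deg_setC EF) deg2 // -[X in _ == X]addn0 eqn_add2l eqn0Ngt.
  by apply/negP => /deg_gt0P[e]; rewrite inE => /negP eE /(clF u uF).
case/exists_inP => w wF /existsP[g /andP[gE gw]].
have [N [EW [[dN dEW gEW cardEW] [gFN degN connN]]]] := grow_walk gF wF gE gw.
have degU x : deg (EF :|: EW) x = deg EF x + deg EW x by rewrite deg_setU // disjoint_sym.
have cD : connected_from r (VF :|: N) (EF :|: EW) := connN r cF.
exists (VF :|: N), (EF :|: EW); split; rewrite ?subsetUl //.
- split=> //.
  + by move=> x; rewrite in_setU degU => /orP[/mF|/degN]; clear; lia.
  + apply: connected_branching cD (_ : w \in _) _; first by rewrite in_setU wF.
    by rewrite degU deg2 //; move: (leq_trans (mult_gt0 gw) (mult_le_deg w gEW)); clear; lia.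
- by move: cardEF; rewrite !cardsU_disjoint 1?disjoint_sym // cardEW; clear; lia.
Qed.

Lemma core_of_rooted r (VF : {set V}) (EF : {set E}) :
  rooted r VF EF -> budget VF EF ->
  exists VD ED, [/\ core VD ED, EF \subset ED, connected_from r VD ED & #|ED| <= #|VD| + 1].
Proof.
case=> gF rF cF posF bF.
have [VD1 [ED1 [[gD1 sV1 sE1 cD1 mD1] cardD1]]] := grow_min_deg2 gF cF posF bF.
have [VD [ED [cD _ sE cD' cardD]]] := grow_branch gD1 (subsetP sV1 r rF) cD1 mD1 cardD1.
by exists VD, ED; split=> //; apply: subset_trans sE.
Qed.

Lemma core_through a b : connect (adj [set: E]) (src a) (src b) ->
  exists VD ED, [/\ core VD ED, a \in ED, b \in ED, connected_from (src a) VD ED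
    & #|ED| <= #|VD| + 1].
Proof.
set A := [set src a; dst a]; case/connectP => p pp lp.
have [y [q [pq lq nAq yA]]] := path_last_exit (mem A) pp.
have {}yA : y \in A by case: yA => [->|//]; rewrite !inE eqxx.
case/shortenP: pq lq => q' pq' /andP[_ uq'] sq'; rewrite -lp => lq'.
have [rA tbA] := rooted_edge yA.
have [|VF [EF [rF lF tbF sEF]]] := rooted_tip_path rA yA tbA pq' uq'.
  by move=> x /sq' xq; exact: (allP nAq x xq).
have bsrc : incident b (src b) by rewrite /Defs.incident eqxx.
rewrite lq' in lF tbF; have [VF' [EF' [rF' bF' bEF' sEF']]] := rooted_add_edge rF lF tbF bsrc.
have [VD [ED [cD sED cnD cardD]]] := core_of_rooted rF' bF'.
exists VD, ED; split=> //; last exact: subsetP sED _ bEF'.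
by apply: (subsetP sED); apply: (subsetP sEF'); apply: (subsetP sEF); rewrite inE.
Qed.

Lemma cacti_subgraph_of_core (k : nat) (VD : {set V}) (ED : {set E}) :
  core VD ED -> #|ED| <= #|VD| + k -> (k%:Z <= Delta [set: V] [set: E])%R ->
  exists VF EF, [/\ is_subgraph VF EF [set: V] [set: E], ED \subset EF, cacti VF EF
    & Delta VF EF = k%:Z%R].
Proof.
move=> cD cardD kG; have gG : is_graph [set: V] [set: E] by apply/graphP.
have [||VF [EF [sDF sFG cF cardF]]] := reduce_to_cacti cD cardD gG _ (cacti_min_deg2 G_cacti).
- by case: cD => gD _ _; apply/and3P; split; rewrite ?subsetT.
- by move: kG; rewrite /Delta; clear; lia.
exists VF, EF; split=> //; first by case/and3P: sDF.
by rewrite /Delta cardF; clear; lia.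
Qed.
End Growth.
End Multigraph.

Theorem mainTheorem5 (V E : finType) (src dst : E -> V) (a b : E)
  (HG : cacti src dst [set: V] [set: E]) :
  (connect (adj src dst [set: E]) (src a) (src b) ->
     forall k : int, (1 <= k)%R -> (k <= Delta [set: V] [set: E])%R ->
     exists (VF : {set V}) (EF : {set E}),
       [/\ is_subgraph src dst VF EF [set: V] [set: E], a \in EF, b \in EF,
           cacti src dst VF EF & Delta VF EF = k])
  /\
  (~~ connect (adj src dst [set: E]) (src a) (src b) ->
     forall k : int, (2 <= k)%R -> (k <= Delta [set: V] [set: E])%R ->
     exists (VF : {set V}) (EF : {set E}),
       [/\ is_subgraph src dst VF EF [set: V] [set: E], a \in EF, b \in EF,
           cacti src dst VF EF & Delta VF EF = k]).
Proof.
split=> [ab|nab] [k|k] hk kG; try by move: hk; clear; lia.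
- have [VD [ED [cD aD bD _ cardD]]] := core_through HG ab.
  have [|VF [EF [sFG sDF cF dF]]] := cacti_subgraph_of_core HG cD _ kG.
    by move: hk cardD; clear; lia.
  by exists VF, EF; split=> //; apply: (subsetP sDF).
have [Va [Ea [cA aA _ connA cardA]]] := core_through HG (connect0 _ (src a)).
have [Vb [Eb [cB bB _ connB cardB]]] := core_through HG (connect0 _ (src b)).
have dV : [disjoint Va & Vb].
  apply/pred0P => x /=; apply/negP => /andP[xa xb]; move/negP: nab; apply.
  apply: connect_trans (connect_subset (subsetT _) (connA x xa)) _.
  by rewrite (sym_connect_sym (adj_sym _ _ _)) (connect_subset (subsetT _) (connB x xb)).
have [|VF [EF [sFG sDF cF dF]]] := cacti_subgraph_of_core HG (core_setU cA cB) _ kG.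
  rewrite (cardsU_disjoint dV); apply: leq_trans (leq_card_setU Ea Eb).1 _.
  by move: hk cardA cardB; clear; lia.
by exists VF, EF; split=> //; apply: (subsetP sDF); rewrite in_setU ?aA ?bB ?orbT.
Qed.
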